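(* Let $k\ge2$ and $n\le0$ with $\mathcal{F}_{n,k}\not\equiv0$, and write $q=q_{n,k}$, $r=r_{n,k}$. Write $\mathcal{F}_{n,k}(x)=x^rP_{n,k}(x^k)$ with $P_{n,k}(\xi)\in\mathbb{Z}[\xi]$ of degree $N=N_{n,k}$, where $N=q-1$ if $r=0$ and $N=q-r$ if $1\le r\le k-1$. Let $\xi_1,\dots,\xi_N$ be its roots counted with multiplicity, and $\sigma_h$ their $h$-th elementary symmetric polynomial. Then, for $h=1,\dots,N$, $$\sigma_h=\begin{cases}(-1)^hC_k\bigl(-(h+1),\,|n|+1-k(h+1)\bigr),& r=0,\\[4pt] (-1)^{h+r}\,C_k\bigl(-(h+r),\,|n|+1-k(h+r)\bigr)\Big/\binom{q-1}{r-1},& 1\le r\le k-1.\end{cases}$$ Moreover, if $N\ge1$, $$\sum_{j=1}^N\xi_j=\begin{cases}-(2q-3),& r=0,\ k=2,\\ -(q-1),& r=0,\ k\ge3,\\ -\dfrac{(r+1)(q-r)}{r},& 1\le r\le k-1,\end{cases}\qquad \prod_{j=1}^N\xi_j=\begin{cases}(-1)^N,& r=0,\\ (-1)^N\dfrac{q}{r},& 1\le r\le k-1.\end{cases}$$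
   Context: For $k\ge2$, the polynomials $\mathcal{F}_{n,k}(x)\in\mathbb{Z}[x]$ ($n\in\mathbb{Z}$) are defined by $\mathcal{F}_{1,k}=1$, $\mathcal{F}_{n,k}=0$ for $n=0,-1,\dots,-(k-2)$, and $\mathcal{F}_{n,k}(x)=\sum_{j=1}^{k}x^{k-j}\mathcal{F}_{n-j,k}(x)$ for all $n\in\mathbb{Z}$. This recurrence is used upwards for $n\ge2$, and downwards for $n\le-(k-1)$ as $\mathcal{F}_{n,k}=\mathcal{F}_{n+k,k}-\sum_{j=1}^{k-1}x^j\mathcal{F}_{n+j,k}$. For $n\le0$: $q_{n,k}=\lfloor(|n|+1)/k\rfloor$, and $r_{n,k}\in\{0,\dots,k-1\}$ is the residue of $|n|+1$ modulo $k$, so $|n|+1=kq_{n,k}+r_{n,k}$. For integers $m<0$ and $j\ge0$, $C_k(m,j)$ is the coefficient of $x^j$ in the formal power series $1/(1+x+\dots+x^{k-1})^{|m|}$. *)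

From HB Require Import structures.
From mathcomp Require Import all_boot all_order all_algebra all_field.
Set Implicit Arguments. Unset Strict Implicit. Unset Printing Implicit Defensive.
Import Order.TTheory GRing.Theory Num.Theory.
Local Open Scope ring_scope.

(* Downward part.  down_seq k t = [:: a_0; ...; a_t] with a_t = F_{1-t,k}:
   a_0 = F_1 = 1, a_1 = ... = a_{k-1} = 0 (F_0, ..., F_{-(k-2)}), and for t >= k
   F_n = F_{n+k} - sum_{j=1}^{k-1} x^j F_{n+j}, i.e.
   a_t = a_{t-k} - sum_{j=1}^{k-1} x^j a_{t-j}. *)
Definition next_down (k : nat) (s : seq {poly int}) : {poly int} :=
  let t := size s in
  if (t < k)%N then 0
  else s`_(t - k) - \sum_(1 <= j < k) 'X^j * s`_(t - j).

Fixpoint down_seq (k t : nat) : seq {poly int} :=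
  match t with
  | 0 => [:: 1]
  | t'.+1 => rcons (down_seq k t') (next_down k (down_seq k t'))
  end.

(* Upward part.  up_seq k u = [:: d_0; ...; d_u] with d_u = F_{u-(k-2),k}:
   d_0..d_{k-2} = 0 (F_{-(k-2)}..F_0), d_{k-1} = F_1 = 1, and for u >= k
   d_u = sum_{j=1}^{k} x^{k-j} d_{u-j}. *)
Definition next_up (k : nat) (s : seq {poly int}) : {poly int} :=
  let u := size s in
  if (u < k.-1)%N then 0
  else if u == k.-1 then 1
  else \sum_(1 <= j < k.+1) 'X^(k - j) * s`_(u - j).

Fixpoint up_seq (k u : nat) : seq {poly int} :=
  match u with
  | 0 => [:: next_up k [::]]
  | u'.+1 => rcons (up_seq k u') (next_up k (up_seq k u'))
  end.

Definition Fnk (k : nat) (n : int) : {poly int} :=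
  if n <= 0 then (let t := `|1 - n|%N in (down_seq k t)`_t)
  else (let u := (`|n|%N + k - 2)%N in (up_seq k u)`_u).

Definition qnk (k : nat) (n : int) : nat := ((`|n|%N + 1) %/ k)%N.
Definition rnk (k : nat) (n : int) : nat := ((`|n|%N + 1) %% k)%N.
(* N_{n,k} as an integer (no truncation). *)
Definition Nnk (k : nat) (n : int) : int :=
  if rnk k n == 0%N then (qnk k n)%:Z - 1 else (qnk k n)%:Z - (rnk k n)%:Z.

(* Coefficients of the reciprocal formal power series 1/p of p with p_0 = 1:
   c_0 = 1, c_j = - sum_{i=1}^{j} p_i c_{j-i}  (i.e. p * c = 1). *)
Definition next_inv (p : {poly int}) (s : seq int) : int :=
  let j := size s in
  if j == 0%N then 1 else - \sum_(1 <= i < j.+1) p`_i * s`_(j - i).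

Fixpoint inv_seq (p : {poly int}) (j : nat) : seq int :=
  match j with
  | 0 => [:: next_inv p [::]]
  | j'.+1 => rcons (inv_seq p j') (next_inv p (inv_seq p j'))
  end.

(* C_k(m,j) = [x^j] 1/(1 + x + ... + x^{k-1})^{|m|}  (used for m < 0). *)
Definition Ck (k : nat) (m : int) (j : nat) : int :=
  (inv_seq ((\sum_(i < k) 'X^i) ^+ `|m|%N) j)`_j.

Definition elem_sym (R : comNzRingType) (s : seq R) (h : nat) : R :=
  \sum_(I : {set 'I_(size s)} | #|I| == h) \prod_(i in I) s`_i.

(* The downward recurrence says that the series
   sum_t F_{1-t,k}(x) z^t equals 1 / (1 - z^k / S(xz)), where
   S(y) = 1 + y + ... + y^(k-1); hence the coefficient of x^e in F_{1-t,k} is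
   C_k(-(t-e)/k, e) when k divides t - e, and 0 otherwise (checked below by
   induction on t).  So F_{n,k} = x^r P(x^k) with
   P = sum_(b <= q) C_k(-(q-b), bk + r) xi^b.  As 1 / S^m = (1-x)^m / (1-x^k)^m,
   C_k(-m, ak + r) is a short alternating sum of products of binomials; it
   vanishes for m < max(r,1) and reduces to a single term for r <= m < r + k.
   This yields the degree and the leading, subleading and constant
   coefficients of P, and Vieta's formulas turn the coefficients of P into the
   elementary symmetric functions of its roots. *)

From HB Require Import structures.
From mathcomp Require Import all_boot all_order all_algebra all_field zify ring.
Import Order.TTheory GRing.Theory Num.Theory.
Local Open Scope ring_scope.
Set Implicit Arguments. Unset Strict Implicit. Unset Printing Implicit Defensive.

Implicit Types p : {poly int}.

Lemma size_inv_seq p j : size (inv_seq p j) = j.+1.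
Proof. by elim: j => //= j IH; rewrite size_rcons IH. Qed.

Definition inv_coef (p : {poly int}) j := (inv_seq p j)`_j.

Lemma nth_inv_seq p j i : (i <= j)%N -> (inv_seq p j)`_i = inv_coef p i.
Proof.
elim: j => [|j IH]; first by rewrite leqn0 => /eqP->.
rewrite leq_eqVlt => /orP[/eqP->//|]; rewrite ltnS => hij /=.
by rewrite nth_rcons size_inv_seq ltnS hij IH.
Qed.

Lemma inv_coefS p j :
  inv_coef p j.+1 = - \sum_(1 <= i < j.+2) p`_i * inv_coef p (j.+1 - i).
Proof.
rewrite /inv_coef /= nth_rcons size_inv_seq ltnn eqxx /next_inv size_inv_seq /=.
congr (- _); rewrite !big_nat; apply: eq_bigr => i /andP[i1 i2].
by rewrite nth_inv_seq //; lia.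
Qed.

Lemma inv_coef_eq p (Q : {poly int}) J : p`_0 = 1 ->
  (forall j, (j < J)%N -> (p * Q)`_j = (j == 0%N)%:R) ->
  forall j, (j < J)%N -> Q`_j = inv_coef p j.
Proof.
move=> p0 pQ; elim/ltn_ind => -[|j] IH hjJ.
  by have := pQ 0%N hjJ; rewrite coefM big_ord1 p0 mul1r.
have := pQ j.+1 hjJ; rewrite coefM -(big_mkord xpredT (fun i => p`_i * Q`_(j.+1 - i))).
rewrite big_ltn // p0 mul1r subn0 /= inv_coefS => /eqP; rewrite addr_eq0 => /eqP->.
congr (- _); rewrite !big_nat; apply: eq_bigr => i /andP[i1 i2].
by rewrite IH //; lia.
Qed.

Definition geom (k : nat) : {poly int} := \sum_(i < k) 'X^i.

Lemma coef_geom k b : (geom k)`_b = (b < k)%:R.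
Proof.
rewrite /geom coef_sum; case: (ltnP b k) => hb.
  rewrite (bigD1 (Ordinal hb)) //= coefXn eqxx big1 ?addr0 // => i /eqP ne.
  by rewrite coefXn; case: eqP => // h; case: ne; apply: val_inj.
rewrite big1 // => i _; rewrite coefXn; case: eqP => // h.
by have := ltn_ord i; rewrite -h ltnNge hb.
Qed.

Lemma mul_1subX_geom k : (1 - 'X) * geom k = 1 - 'X^k.
Proof. by rewrite -opprB mulNr /geom -subrX1 opprB. Qed.

Lemma coef0_geomX k m : (0 < k)%N -> ((geom k) ^+ m)`_0 = 1.
Proof.
move=> k0; elim: m => [|m IH]; first by rewrite expr0 coef1.
by rewrite exprS coef0M IH coef_geom k0 mulr1.
Qed.

Lemma hockey_stick b m : (\sum_(i < b.+1) 'C(i + m, m) = 'C(b + m.+1, m.+1))%N.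
Proof.
elim: b => [|b IH]; first by rewrite big_ord1 add0n binn add0n binn.
rewrite big_ord_recr /= IH.
have -> : (b.+1 + m.+1 = (b + m.+1).+1)%N by rewrite addSn.
by rewrite [in RHS]binS addnS addSn.
Qed.

Lemma coef_geomX J m b : (b < J)%N -> ((geom J) ^+ m.+1)`_b = ('C(b + m, m))%:R.
Proof.
elim: m b => [|m IH] b hb; first by rewrite expr1 coef_geom hb bin0.
rewrite exprSr coefM (eq_bigr (fun i : 'I_b.+1 => ('C(i + m, m))%:R)).
  by rewrite -natr_sum hockey_stick addnS.
move=> i _; have hi : (i < J)%N by apply: leq_ltn_trans hb; rewrite -ltnS.
by rewrite IH // coef_geom (leq_ltn_trans (leq_subr _ _) hb) mulr1.
Qed.

Lemma coef_1subXnX (M m j : nat) : (j < M)%N ->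
  ((1 - 'X^M : {poly int}) ^+ m)`_j = (j == 0%N)%:R.
Proof.
move=> hj; elim: m => [|m IH]; first by rewrite expr0 coef1.
by rewrite exprSr mulrBr mulr1 coefB mulrC coefXnM hj subr0 IH.
Qed.

Notation Cneg k m j := (Ck k (- (m%:Z)) j).

(* As [geom k * (geom J \Po 'X^k) = geom (k * J)], multiplying by
   [geom k ^+ m] gives [(1 - 'X^(k * J)) ^+ m]: below degree [k * J] this
   polynomial is the series [1 / geom k ^+ m]. *)
Definition Ck_poly (k m J : nat) : {poly int} :=
  (1 - 'X) ^+ m * ((geom J) ^+ m \Po 'X^k).

Lemma geomX_mul_Ck_poly k m J : (0 < k)%N -> (0 < J)%N ->
  forall j, (j < J)%N -> ((geom k) ^+ m * Ck_poly k m J)`_j = (j == 0%N)%:R.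
Proof.
move=> k0 J0 j hj.
have -> : (geom k) ^+ m * Ck_poly k m J = (1 - 'X^(k * J)) ^+ m.
  rewrite /Ck_poly rmorphXn mulrA -exprMn [geom k * _]mulrC mul_1subX_geom -exprMn.
  have -> : (1 - 'X^k : {poly int}) = (1 - 'X) \Po 'X^k.
    by rewrite comp_polyB comp_polyX -polyC1 comp_polyC.
  by rewrite -comp_polyM mul_1subX_geom comp_polyB -polyC1 comp_polyC comp_Xn_poly -exprM.
by apply: coef_1subXnX; apply: leq_trans hj _; rewrite leq_pmull.
Qed.

Lemma Ck_neg_poly k m J j : (0 < k)%N -> (j < J)%N -> Cneg k m j = (Ck_poly k m J)`_j.
Proof.
move=> k0 hj; rewrite /Ck abszN absz_nat -/(inv_coef _ j); symmetry.
apply: (inv_coef_eq (J := J)) => //; first exact: coef0_geomX.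
exact: geomX_mul_Ck_poly (leq_ltn_trans (leq0n j) hj).
Qed.

Lemma Ck_neg0 k j : Cneg k 0 j = (j == 0%N)%:R.
Proof.
rewrite /Ck abszN absz_nat expr0 -/(inv_coef _ j) -(coef1 int j); symmetry.
apply: (inv_coef_eq (J := j.+1)) => //; first by rewrite coef1.
by move=> l _; rewrite mul1r coef1.
Qed.

Lemma Ck_negE k m j : (0 < k)%N ->
  Cneg k m.+1 j = \sum_(i < m.+2) (-1) ^+ i * ('C(m.+1, i))%:R *
     (if (i <= j)%N && (k %| j - i)%N then ('C((j - i) %/ k + m, m))%:R else 0).
Proof.
move=> k0; rewrite (Ck_neg_poly m.+1 (J := j.+1)) // /Ck_poly exprBn mulr_suml coef_sum.
apply: eq_bigr => i _; rewrite expr1n mulr1 mulrnAl coefMn.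
rewrite -[-1]polyCN -polyC_exp -[in LHS]mulrA coefCM coefXnM coef_comp_poly_Xn //.
rewrite -mulrnAr -mulrA mulr_natl; congr (_ * _).
case: (ltnP j i) => hij /=; first by rewrite mul0rn.
case: (k %| j - i)%N => //; rewrite coef_geomX // ltnS.
exact: leq_trans (leq_div _ _) (leq_subr _ _).
Qed.

Lemma Ck_neg_conv k m e : (0 < k)%N ->
  Cneg k m e = \sum_(i < e.+1) (i < k)%:R * Cneg k m.+1 (e - i).
Proof.
move=> k0; have J0 : (0 < e.+1)%N by [].
have -> : Cneg k m e = (geom k * Ck_poly k m.+1 e.+1)`_e.
  rewrite /Ck abszN absz_nat -/(inv_coef _ e); symmetry.
  apply: (inv_coef_eq (J := e.+1)) => //; first exact: coef0_geomX.
  by move=> l hl; rewrite mulrA -exprSr geomX_mul_Ck_poly.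
rewrite coefM; apply: eq_bigr => i _.
by rewrite coef_geom -Ck_neg_poly // ltnS leq_subr.
Qed.

Lemma ndvdn_mulnD k a x : (0 < x)%N -> (x < k)%N -> ~~ (k %| a * k + x)%N.
Proof.
move=> x0 xk; rewrite dvdn_addr ?dvdn_mull //.
by apply/negP => /(dvdn_leq x0); rewrite leqNgt xk.
Qed.

Lemma Ck_neg_vanish k m a r : (0 < k)%N -> (r < k)%N -> (m < maxn r 1)%N ->
  (0 < a + r)%N -> Cneg k m (a * k + r) = 0.
Proof.
move=> k0 rk mr ar; case: m mr => [|m] mr.
  by rewrite Ck_neg0 (_ : (a * k + r == 0)%N = false) //; nia.
rewrite Ck_negE // big1 // => i _.
case: (leqP i m.+1) => him; last by rewrite bin_small // mulr0 mul0r.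
rewrite (_ : (k %| a * k + r - i)%N = false) ?andbF ?mulr0 //.
apply/negbTE; rewrite (_ : (a * k + r - i = a * k + (r - i))%N); last by lia.
apply: ndvdn_mulnD; lia.
Qed.

(* Only the term [i = r] of [Ck_negE] survives. *)
Lemma Ck_neg_single k m a r : (0 < k)%N -> (r < k)%N -> (r <= m.+1)%N ->
  (m.+1 < r + k)%N || (a == 0%N) ->
  Cneg k m.+1 (a * k + r) = (-1) ^+ r * ('C(m.+1, r))%:R * ('C(a + m, m))%:R.
Proof.
move=> k0 rk rm hyp; rewrite Ck_negE //.
have hr : (r < m.+2)%N by lia.
rewrite (bigD1 (Ordinal hr)) //= big1 ?addr0.
  by rewrite (_ : (r <= a * k + r)%N) ?addnK ?dvdn_mull ?mulnK //=; lia.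
move=> i /eqP ne.
have ne' : (nat_of_ord i != r) by apply/eqP => h; apply: ne; apply: val_inj.
case: (leqP i (a * k + r)) => hij /=; last by rewrite mulr0.
case: (ltnP i r) => hir.
  rewrite (_ : (a * k + r - i = a * k + (r - i))%N); last by lia.
  by rewrite (negbTE (ndvdn_mulnD _ _ _)) ?mulr0 //; lia.
case/orP: hyp => [hyp|/eqP a0]; last by subst a; lia.
rewrite (_ : (k %| a * k + r - i)%N = false) ?mulr0 //.
apply/negP => hd.
have : (k %| (a * k + r - i) + (i - r))%N.
  by rewrite (_ : ((a * k + r - i) + (i - r) = a * k)%N) ?dvdn_mull //; lia.
rewrite dvdn_addr // => /(dvdn_leq _); have := ltn_ord i; lia.
Qed.

Lemma Ck2_neg2 a : Cneg 2 2 (a * 2) = (2 * a + 1)%:R.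
Proof.
rewrite Ck_negE // !big_ord_recr big_ord0 /= add0r.
rewrite (_ : 'C(2,0) = 1%N) // (_ : 'C(2,1) = 2%N) // (_ : 'C(2,2) = 1%N) //.
rewrite expr0 !mul1r subn0 dvdn_mull // mulnK // addn1 bin1.
case: a => [|a] /=; first by rewrite !mulr0 !addr0.
rewrite (_ : (2 %| a.+1 * 2 - 1)%N = false) ?andbF ?mulr0 ?addr0; last first.
  rewrite (_ : (a.+1 * 2 - 1 = a * 2 + 1)%N); last by lia.
  by apply/negbTE; apply: ndvdn_mulnD.
rewrite (_ : (a.+1 * 2 - 2 = a * 2)%N) ?dvdn_mull // ?mulnK //; last by lia.
rewrite addn1 bin1 -natrD; congr (_%:R); lia.
Qed.

Lemma size_down_seq k t : size (down_seq k t) = t.+1.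
Proof. by elim: t => //= t IH; rewrite size_rcons IH. Qed.

(* [Fdown k t] is F_{1-t,k}. *)
Definition Fdown k t := (down_seq k t)`_t.

Lemma nth_down_seq k t i : (i <= t)%N -> (down_seq k t)`_i = Fdown k i.
Proof.
elim: t => [|t IH]; first by rewrite leqn0 => /eqP->.
rewrite leq_eqVlt => /orP[/eqP->//|]; rewrite ltnS => hit /=.
by rewrite nth_rcons size_down_seq ltnS hit IH.
Qed.

Lemma FdownS k t : (0 < k)%N -> Fdown k t.+1 = if (t.+1 < k)%N then 0
   else Fdown k (t.+1 - k) - \sum_(1 <= j < k) 'X^j * Fdown k (t.+1 - j).
Proof.
move=> k0; rewrite /Fdown /= nth_rcons size_down_seq ltnn eqxx /next_down size_down_seq.
case: ifP => // hk; rewrite nth_down_seq; last by lia.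
congr (_ - _); rewrite !big_nat; apply: eq_bigr => i /andP[i1 i2].
by rewrite nth_down_seq //; lia.
Qed.

Lemma Fnk_Fdown k n : n <= 0 -> Fnk k n = Fdown k (`|n|%N + 1).
Proof. by move=> hn; rewrite /Fnk hn /Fdown; congr (nth _ (down_seq k _) _); lia. Qed.

Definition Fdown_coef k t e : int :=
  if (e <= t)%N && (k %| t - e)%N then Cneg k ((t - e) %/ k) e else 0.

Lemma Fdown_coefE k t e M : (0 < k)%N -> (e <= t)%N -> (t - e = M * k)%N ->
  Fdown_coef k t e = Cneg k M e.
Proof. by move=> k0 het hM; rewrite /Fdown_coef het hM dvdn_mull //= mulnK. Qed.

Lemma Fdown_coef_gt k t e : (t < e)%N -> Fdown_coef k t e = 0.
Proof. by move=> h; rewrite /Fdown_coef leqNgt h. Qed.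

Lemma Fdown_coef_ndvd k t e : ~~ (k %| t - e)%N -> Fdown_coef k t e = 0.
Proof. by move=> h; rewrite /Fdown_coef (negbTE h) andbF. Qed.

Lemma sum_indicator_lt (F : nat -> int) e k :
  \sum_(1 <= i < e.+1) (i < k)%:R * F i = \sum_(1 <= j < k) (if (e < j)%N then 0 else F j).
Proof.
rewrite (big_nat_widen _ _ _ _ _ (leq_addr k e.+1)).
rewrite [RHS](big_nat_widen _ _ _ _ _ (leq_addl e.+1 k)) addnC.
rewrite [LHS]big_mkcond [RHS]big_mkcond /=; apply: eq_bigr => i _.
case: (ltnP i k) => hik; case: (ltnP e i) => hei /=;
  rewrite ltnS; case: ifP => h; rewrite ?mul1r ?mul0r //; lia.
Qed.

(* When [k %| T - e] and [e < T] this is [Ck_neg_conv]. *)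
Lemma Fdown_coef_rec k T e : (0 < k)%N -> (k <= T)%N ->
  Fdown_coef k T e = Fdown_coef k (T - k) e
    - \sum_(1 <= j < k) (if (e < j)%N then 0 else Fdown_coef k (T - j) (e - j)).
Proof.
move=> k0 kT.
have sum0 : (forall j, (1 <= j < k)%N -> (j <= e)%N -> Fdown_coef k (T - j) (e - j) = 0) ->
    \sum_(1 <= j < k) (if (e < j)%N then 0 else Fdown_coef k (T - j) (e - j)) = 0.
  move=> H; rewrite big_nat big1 // => j hj; case: ltnP => // hje; exact: H.
case: (ltnP T e) => heT.
  rewrite sum0 => [|j /andP[_ hjk] hje]; first by rewrite !Fdown_coef_gt ?subr0 //; lia.
  by rewrite Fdown_coef_gt //; lia.
case: (boolP (k %| T - e)%N) => hdv; last first.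
  have hsub : forall j, (j <= e)%N -> (T - j - (e - j) = T - e)%N by lia.
  rewrite Fdown_coef_ndvd // sum0 => [|j _ hje]; last by rewrite Fdown_coef_ndvd ?hsub.
  case: (ltnP (T - k) e) => hh; first by rewrite Fdown_coef_gt ?subr0.
  rewrite Fdown_coef_ndvd ?subr0 //; apply: contra hdv => h.
  by rewrite (_ : (T - e = (T - k - e) + k)%N) ?dvdn_addl //; lia.
have [[|M] hM] := dvdnP hdv.
  have eT : e = T by lia.
  have e0 : (e == 0%N) = false by lia.
  rewrite (Fdown_coefE k0 heT hM) Ck_neg0 e0 Fdown_coef_gt; last by lia.
  rewrite sum0 ?subr0 // => j /andP[_ hjk] hje.
  have ej0 : (e - j == 0)%N = false by lia.
  by rewrite (@Fdown_coefE _ _ _ 0) ?Ck_neg0 ?ej0 //; lia.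
have h1 : (e <= T - k)%N by lia.
have h2 : (T - k - e = M * k)%N by lia.
rewrite (Fdown_coefE k0 heT hM) (Fdown_coefE k0 h1 h2) (Ck_neg_conv M e k0).
rewrite -(big_mkord xpredT (fun i => (i < k)%:R * Cneg k M.+1 (e - i))).
rewrite big_ltn // k0 mul1r subn0 sum_indicator_lt -[LHS](addrK
  (\sum_(1 <= j < k) (if (e < j)%N then 0 else Cneg k M.+1 (e - j)))).
congr (_ - _); rewrite !big_nat; apply: eq_bigr => j /andP[j1 j2]; case: ifP => // hej.
by rewrite (@Fdown_coefE _ _ _ M.+1) //; lia.
Qed.

Lemma coef_Fdown k t e : (0 < k)%N -> (Fdown k t)`_e = Fdown_coef k t e.
Proof.
move=> k0; elim/ltn_ind: t e => -[|t] IH e.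
  by rewrite /Fdown /= coef1 /Fdown_coef; case: e => //=; rewrite dvdn0 div0n Ck_neg0.
rewrite FdownS //; case: ifP => hk.
  rewrite coef0 /Fdown_coef; case: ifP => // /andP[het hdv].
  have h0 : (t.+1 - e = 0)%N.
    apply/eqP; apply: contraLR hdv; rewrite -lt0n => hpos.
    by apply/negP => /(dvdn_leq hpos); lia.
  by rewrite h0 div0n Ck_neg0 (_ : (e == 0%N) = false) //; lia.
rewrite Fdown_coef_rec //; last by move: hk; case: ltnP.
rewrite coefB coef_sum IH; last by lia.
congr (_ - _); rewrite !big_nat; apply: eq_bigr => j /andP[j1 j2].
by rewrite coefXnM IH //; lia.
Qed.

Lemma mulXn_comp_Xn_inj (r k : nat) p p' : (0 < k)%N ->
  'X^r * (p \Po 'X^k) = 'X^r * (p' \Po 'X^k) -> p = p'.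
Proof.
move=> k0 /(mulfI (monic_neq0 (monicXn _ r))) e; apply/polyP => b.
have := congr1 (coefp (b * k)) e.
by rewrite /= !coef_comp_poly_Xn // dvdn_mull // mulnK.
Qed.

Definition Ppoly k q r : {poly int} := \poly_(b < q.+1) Cneg k (q - b) (b * k + r).

Lemma coef_Ppoly k q r b :
  (Ppoly k q r)`_b = if (b <= q)%N then Cneg k (q - b) (b * k + r) else 0.
Proof. by rewrite coef_poly ltnS. Qed.

Lemma Fdown_Ppoly k q r : (0 < k)%N -> (r < k)%N ->
  Fdown k (q * k + r) = 'X^r * (Ppoly k q r \Po 'X^k).
Proof.
move=> k0 rk; apply/polyP => e.
rewrite coef_Fdown // coefXnM coef_comp_poly_Xn // coef_Ppoly.
case: (ltnP e r) => her.
  apply: Fdown_coef_ndvd; rewrite (_ : q * k + r - e = q * k + (r - e))%N; last by lia.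
  by apply: ndvdn_mulnD; lia.
case: (boolP (k %| e - r)%N) => hd.
  have [b hb] := dvdnP hd; have -> : e = (b * k + r)%N by lia.
  rewrite addnK mulnK //; case: leqP => hbq; last by apply: Fdown_coef_gt; nia.
  by apply: Fdown_coefE => //; rewrite ?mulnBl; nia.
case: (ltnP (q * k + r) e) => heT; first exact: Fdown_coef_gt.
apply: Fdown_coef_ndvd; apply: contra hd => h.
rewrite (_ : e - r = (q * k + r - r) - (q * k + r - e))%N; last by lia.
by rewrite dvdn_sub // addnK dvdn_mull.
Qed.

Section PpolyCoefficients.

Variables k q r : nat.
Hypotheses (k_gt1 : (1 < k)%N) (r_lt_k : (r < k)%N) (qr_gt0 : (0 < q + r)%N).

Let k_gt0 : (0 < k)%N. Proof. exact: ltnW. Qed.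

Lemma Ppoly_eq0 : (q < maxn r 1)%N -> Ppoly k q r = 0.
Proof.
move=> hq; apply/polyP => b; rewrite coef_Ppoly coef0; case: leqP => // hb.
by apply: Ck_neg_vanish => //; lia.
Qed.

(* [q - maxn r 1] is N_{n,k}. *)
Hypothesis q_ge : (maxn r 1 <= q)%N.

Lemma coef_Ppoly_gt b : (q - maxn r 1 < b)%N -> (Ppoly k q r)`_b = 0.
Proof.
move=> hb; rewrite coef_Ppoly; case: leqP => // hbq.
by apply: Ck_neg_vanish => //; lia.
Qed.

(* For [r = 0] the binomial is ['C(q.-1, 0) = 1]. *)
Lemma lead_coef_Ppoly :
  (Ppoly k q r)`_(q - maxn r 1) = (-1) ^+ r * ('C(q.-1, r.-1))%:R.
Proof.
rewrite coef_Ppoly leq_subr subKn //; case: r r_lt_k q_ge => [|r'] rk hq /=.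
  rewrite max0n (@Ck_neg_single k 0 _ 0) ?expr0 ?bin0 ?mul1r ?addn0 ?bin0 //.
  by rewrite add0n k_gt1.
rewrite (_ : maxn r'.+1 1 = r'.+1); last by lia.
rewrite (@Ck_neg_single k r' _ r'.+1) ?binn ?mulr1 //; last by lia.
by congr (_ * ('C(_, _))%:R); lia.
Qed.

Lemma size_Ppoly : size (Ppoly k q r) = (q - maxn r 1).+1.
Proof.
apply/eqP; rewrite eqn_leq; apply/andP; split.
  by apply/leq_sizeP => j hj; apply: coef_Ppoly_gt.
rewrite ltnNge; apply/negP => /leq_sizeP /(_ _ (leqnn _)) /eqP.
rewrite lead_coef_Ppoly mulf_eq0 signr_eq0 pnatr_eq0 /= eqn0Ngt bin_gt0 => /negP.
by apply; lia.
Qed.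

Lemma coef0_Ppoly : (Ppoly k q r)`_0 = (-1) ^+ r * ('C(q, r))%:R.
Proof.
rewrite coef_Ppoly leq0n subn0 -(mul0n k) (_ : q = q.-1.+1); last by lia.
by rewrite Ck_neg_single ?eqxx ?orbT ?add0n ?binn ?mulr1 //; lia.
Qed.

Lemma coef_Ppoly_sub h : (h <= q - maxn r 1)%N ->
  (Ppoly k q r)`_(q - maxn r 1 - h) =
    Cneg k (h + maxn r 1) ((q - maxn r 1 - h) * k + r).
Proof.
move=> hh; rewrite coef_Ppoly (_ : q - maxn r 1 - h <= q)%N; last by lia.
by rewrite (_ : q - (q - maxn r 1 - h) = h + maxn r 1)%N //; lia.
Qed.

Lemma coef_Ppoly_subleading : (1 <= q - maxn r 1)%N ->
  (Ppoly k q r)`_(q - maxn r 1).-1 =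
    if r == 0%N then (if k == 2%N then (2 * q - 3)%:R else (q - 1)%:R)
    else (-1) ^+ r * (r.+1 * 'C(q.-1, r))%:R.
Proof.
move=> hN; rewrite -subn1 coef_Ppoly_sub //.
case: (r =P 0%N) => [r0|/eqP r0].
  rewrite r0 max0n addn0.
  case: (k =P 2%N) => [k2|/eqP k2].
    by rewrite k2 (_ : (q - 1 - 1) * 2 = (q - 2) * 2)%N ?Ck2_neg2; [congr _%:R|]; lia.
  rewrite -[((q - 1 - 1) * k)%N]addn0 Ck_neg_single ?expr0 ?bin0 ?mul1r ?bin1 //.
    by congr _%:R; lia.
  by apply/orP; left; lia.
rewrite (_ : maxn r 1 = r); last by lia.
rewrite add1n Ck_neg_single //; last by apply/orP; left; lia.
rewrite binSn -mulrA -natrM; congr (_ * (_ * 'C(_, _))%:R); lia.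
Qed.

End PpolyCoefficients.

Section Vieta.

Variables (F : fieldType) (p : {poly F}) (xs : seq F).
Hypotheses (p_neq0 : p != 0)
  (p_split : p = lead_coef p *: \prod_(x <- xs) ('X - x%:P)).

Lemma size_split_poly : size p = (size xs).+1.
Proof. by rewrite {1}p_split size_scale ?lead_coef_eq0 // size_prod_XsubC. Qed.

Lemma coef_split_poly i : (\prod_(x <- xs) ('X - x%:P))`_i = p`_i / lead_coef p.
Proof. by rewrite {1}p_split coefZ mulrAC mulfV ?lead_coef_eq0 ?mul1r. Qed.

Lemma elem_sym_roots h : (h <= size xs)%N ->
  elem_sym xs h = (-1) ^+ h * (p`_(size xs - h) / lead_coef p).
Proof.
by move=> hh; rewrite -coef_split_poly coef_prod_XsubC ?leq_subr // subKn // signrMK.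
Qed.

Lemma sum_roots : size xs != 0%N ->
  \sum_(x <- xs) x = - (p`_(size xs).-1 / lead_coef p).
Proof. by move=> /coefPn_prod_XsubC; rewrite coef_split_poly => ->; rewrite opprK. Qed.

Lemma prod_roots : \prod_(x <- xs) x = (-1) ^+ size xs * (p`_0 / lead_coef p).
Proof. by rewrite -coef_split_poly coef0_prod_XsubC signrMK. Qed.

End Vieta.

Section BinomialRatios.

Variables (R : numFieldType) (q r : nat).
Hypotheses (r_gt0 : (0 < r)%N) (r_le_q : (r <= q)%N).

Let bin_neq0 : ('C(q.-1, r.-1)%:R : R) != 0.
Proof. by rewrite pnatr_eq0 -lt0n bin_gt0; lia. Qed.

Let r_neq0 : (r%:R : R) != 0.
Proof. by rewrite pnatr_eq0 -lt0n. Qed.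

Lemma bin_ratio_diag : 'C(q, r)%:R / 'C(q.-1, r.-1)%:R = q%:R / r%:R :> R.
Proof.
apply/eqP; rewrite eqr_div // -!natrM eqr_nat mulnC.
by rewrite mul_bin_diag prednK.
Qed.

Lemma bin_ratio_left : 'C(q.-1, r)%:R / 'C(q.-1, r.-1)%:R = (q - r)%:R / r%:R :> R.
Proof.
apply/eqP; rewrite eqr_div // -!natrM eqr_nat mulnC.
have := mul_bin_left q.-1 r.-1; rewrite prednK // => ->.
by rewrite (_ : q.-1 - r.-1 = q - r)%N //; lia.
Qed.

End BinomialRatios.

Section PpolyRoots.

Variables (k q r : nat) (xs : seq algC).
Hypotheses (k_gt1 : (1 < k)%N) (r_lt_k : (r < k)%N) (qr_gt0 : (0 < q + r)%N)
  (q_ge : (maxn r 1 <= q)%N).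

Local Notation Pc := (map_poly (fun z : int => z%:~R : algC) (Ppoly k q r)).

Hypothesis xs_roots : Pc = lead_coef Pc *: \prod_(x <- xs) ('X - x%:P).

Let coef_Pc i : Pc`_i = ((Ppoly k q r)`_i)%:~R.
Proof. exact: coef_map_id0. Qed.

Let size_Pc : size Pc = (q - maxn r 1).+1.
Proof. by rewrite size_map_inj_poly ?size_Ppoly // => x y /intr_inj. Qed.

Let Pc_neq0 : Pc != 0.
Proof. by rewrite -size_poly_eq0 size_Pc. Qed.

Let lead_Pc : lead_coef Pc = (-1) ^+ r * ('C(q.-1, r.-1))%:R.
Proof.
by rewrite lead_coefE size_Pc coef_Pc lead_coef_Ppoly // intrM intr_sign rmorph_nat.
Qed.

Let size_xs : size xs = (q - maxn r 1)%N.
Proof. by have := size_split_poly Pc_neq0 xs_roots; rewrite size_Pc => -[]. Qed.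

Let bin_neq0 : ('C(q.-1, r.-1)%:R : algC) != 0.
Proof. by rewrite pnatr_eq0 -lt0n bin_gt0; lia. Qed.

Lemma elem_sym_Ppoly h : (h <= q - maxn r 1)%N ->
  elem_sym xs h = (-1) ^+ (h + r) *
    (Cneg k (h + maxn r 1) ((q - maxn r 1 - h) * k + r))%:~R / ('C(q.-1, r.-1))%:R.
Proof.
move=> hh; rewrite (elem_sym_roots Pc_neq0 xs_roots) size_xs //.
by rewrite coef_Pc coef_Ppoly_sub // lead_Pc invfM invr_sign exprD; ring.
Qed.

Lemma prod_roots_Ppoly :
  \prod_(x <- xs) x = (-1) ^+ (q - maxn r 1) * 'C(q, r)%:R / 'C(q.-1, r.-1)%:R.
Proof.
rewrite (prod_roots Pc_neq0 xs_roots) size_xs coef_Pc coef0_Ppoly // lead_Pc.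
rewrite intrM intr_sign rmorph_nat -mulrA; congr (_ * _).
by field; rewrite signr_eq0 bin_neq0.
Qed.

Lemma sum_roots_Ppoly : (1 <= q - maxn r 1)%N ->
  \sum_(x <- xs) x =
    if r == 0%N then
      (if k == 2%N then - ((2 * q%:Z - 3)%:~R) else - ((q%:Z - 1)%:~R))
    else - (((r%:Z + 1) * (q%:Z - r%:Z))%:~R / r%:R).
Proof.
move=> hN; rewrite (sum_roots Pc_neq0 xs_roots) ?size_xs -?lt0n //.
rewrite coef_Pc coef_Ppoly_subleading // lead_Pc.
case: (r =P 0%N) => [->|/eqP r0] /=.
  rewrite expr0 bin0 mul1r divr1; case: (k == 2%N); congr (- _%:~R); lia.
rewrite [in LHS]intrM intr_sign rmorph_nat natrM.
transitivity (- (r.+1%:R * ('C(q.-1, r)%:R / 'C(q.-1, r.-1)%:R)) : algC).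
  by congr (- _); field; rewrite signr_eq0 bin_neq0.
rewrite bin_ratio_left ?lt0n //; last by lia.
rewrite (_ : (r%:Z + 1) * (q%:Z - r%:Z) = (r.+1 * (q - r))%N :> int); last by lia.
by rewrite -pmulrn natrM mulrA.
Qed.

End PpolyRoots.

Unset Implicit Arguments.

Theorem mainTheorem18 (k : nat) (n : int) :
  (2 <= k)%N -> n <= 0 -> Fnk k n != 0 ->
  let q := qnk k n in let r := rnk k n in let N := Nnk k n in
  (exists P : {poly int}, Fnk k n = 'X^r * (P \Po 'X^k)) /\
  forall P : {poly int}, Fnk k n = 'X^r * (P \Po 'X^k) ->
    (size P)%:Z = N + 1 /\
    forall xs : seq algC,
      map_poly (fun z : int => z%:~R) P
        = lead_coef (map_poly (fun z : int => z%:~R) P) *: \prod_(z <- xs) ('X - z%:P) ->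
      (forall h : nat, (1 <= h)%N -> h%:Z <= N ->
         elem_sym xs h =
           (if r == 0%N then
              (-1) ^+ h * (Ck k (- (h.+1)%:Z) (`|n|%N + 1 - k * h.+1)%N)%:~R
            else
              (-1) ^+ (h + r) * (Ck k (- (h + r)%:Z) (`|n|%N + 1 - k * (h + r))%N)%:~R
                / ('C(q - 1, r - 1))%:R)) /\
      (1 <= N ->
         \sum_(x <- xs) x =
           (if r == 0%N then
              (if k == 2%N then - ((2 * q%:Z - 3)%:~R) else - ((q%:Z - 1)%:~R))
            else - (((r%:Z + 1) * (q%:Z - r%:Z))%:~R / r%:R))
         /\
         \prod_(x <- xs) x =
           (if r == 0%N then (-1) ^ N
            else (-1) ^ N * q%:R / r%:R)).
Proof.
move=> k_gt1 n_le0 F_neq0 q r N.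
have T_eq : (`|n|%N + 1 = q * k + r)%N by rewrite /q /r /qnk /rnk -divn_eq.
have r_lt_k : (r < k)%N by rewrite /r /rnk ltn_pmod //; lia.
have qr_gt0 : (0 < q + r)%N by nia.
have F_eq : Fnk k n = 'X^r * (Ppoly k q r \Po 'X^k).
  by rewrite Fnk_Fdown // T_eq Fdown_Ppoly //; lia.
have q_ge : (maxn r 1 <= q)%N.
  by rewrite leqNgt; apply: contra F_neq0 => hq; rewrite F_eq Ppoly_eq0 ?comp_poly0 ?mulr0.
have N_eq : N = (q - maxn r 1)%N :> int by rewrite /N /Nnk; case: eqP; lia.
split; first by exists (Ppoly k q r).
move=> P; rewrite F_eq => /mulXn_comp_Xn_inj <-; last by lia.
split; first by rewrite size_Ppoly // N_eq; lia.
move=> xs xs_roots; rewrite N_eq.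
have elem_sym_xs := elem_sym_Ppoly k_gt1 r_lt_k qr_gt0 q_ge xs_roots.
have sum_xs := sum_roots_Ppoly k_gt1 r_lt_k qr_gt0 q_ge xs_roots.
have prod_xs := prod_roots_Ppoly k_gt1 r_lt_k qr_gt0 q_ge xs_roots.
split.
  move=> h h_gt0 h_le; rewrite elem_sym_xs; last by lia.
  rewrite (_ : (q - maxn r 1 - h) * k + r = `|n| + 1 - k * (h + maxn r 1))%N; last by nia.
  case: eqP => [->|/eqP r0]; first by rewrite max0n addn1 bin0 divr1 addn0.
  by rewrite (_ : maxn r 1 = r) -?subn1 //; lia.
move=> N_ge1; split; first by rewrite sum_xs //; lia.
rewrite prod_xs -exprnP; case: eqP => [->|/eqP r0].
  by rewrite !bin0 divr1 mulr1.
by rewrite -mulrA bin_ratio_diag ?mulrA //; lia.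
Qed.
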